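(* Assume conditions (A1)–(A5) below. Then for almost every $\omega\in\Omega$ there exists a constant $\hat\rho(\omega)>0$ such that the map $\theta\mapsto\max_{W\in\mathcal W}F(W,H(\theta,\omega))$ is $\hat\rho(\omega)$-weakly convex on $\Theta$.
   Context: Let $(\Xi,\mathscr F,P)$ be a complete probability space and $\omega:\Xi\to\Omega$ a random element; $\mathcal Z_p$ is the space of measurable real functions of $\omega$ with finite $p$-th absolute moment. Let $S,M_U$ be positive integers, $\Theta\subset\mathbb R^S$, $\mathcal W\subset\mathbb C^{M_U}$, $F:\mathbb C^{M_U}\times\mathbb C^{M_U}\to\mathbb R$, $H:\mathcal U\times\Omega\to\mathbb C^{M_U}$ with $\mathcal U\supset\Theta$ open. A function $g$ is $\rho$-weakly convex (resp. concave) on a set if $g+\frac\rho2\|\cdot\|^2$ (resp. $-g+\frac\rho2\|\cdot\|^2$) is convex there. Conditions: (A1) $F$ is twice continuously real-differentiable; (A2) $\Theta,\mathcal W$ compact, $\Theta$ convex; (A3) there are constants $B_H,L_{H,0},L_{H,1}$ such that for a.e. $\omega$, $H(\cdot,\omega)$ is bounded by $B_H$ on $\Theta$, twice continuously differentiable on $\mathcal U$, $L_{H,0}$-Lipschitz with $L_{H,1}$-Lipschitz gradient on $\Theta$; (A4) there is a positive $\tilde\rho\in\mathcal Z_1$ such that for a.e. $\omega$, $\theta\mapsto\max_{W\in\mathcal W}F(W,H(\theta,\omega))$ is $\tilde\rho(\omega)$-weakly concave on $\Theta$; (A5) for all $\theta\in\Theta$ and any maximizer $W^*(\theta,\omega)\in\arg\max_{W\in\mathcal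 W}F(W,H(\theta,\omega))$, $\omega\mapsto F(W^*(\theta,\omega),H(\theta,\omega))$ is in $\mathcal Z_2$ and bounded below, and i.i.d. samples of $\omega$ can be drawn. *)

From HB Require Import structures.
From mathcomp Require Import all_boot all_order all_algebra.
From mathcomp Require Import all_classical all_reals all_analysis.
Set Implicit Arguments. Unset Strict Implicit. Unset Printing Implicit Defensive.
Import Order.TTheory GRing.Theory Num.Theory.
Import numFieldNormedType.Exports.
Local Open Scope classical_set_scope.
Local Open Scope ring_scope.

(* C^M, encoded through its real realification: z = (Re z, Im z). *)
Definition Cvec (R : realType) (M : nat) : Type := ('rV[R]_M * 'rV[R]_M)%type.

Definition sqnorm (R : realType) (S : nat) (x : 'rV[R]_S) : R :=
  \sum_(i < S) (x ord0 i) ^+ 2.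

Definition convex_set_on (R : realType) (S : nat) (X : set 'rV[R]_S) : Prop :=
  forall x y t, X x -> X y -> 0 <= t <= 1 -> X (t *: x + (1 - t) *: y).

Definition convex_fun_on (R : realType) (S : nat) (X : set 'rV[R]_S)
  (g : 'rV[R]_S -> R) : Prop :=
  forall x y t, X x -> X y -> 0 <= t <= 1 ->
    g (t *: x + (1 - t) *: y) <= t * g x + (1 - t) * g y.

Definition weakly_convex_on (R : realType) (S : nat) (X : set 'rV[R]_S)
  (rho : R) (g : 'rV[R]_S -> R) : Prop :=
  convex_fun_on X (fun x => g x + rho / 2 * sqnorm x).

Definition weakly_concave_on (R : realType) (S : nat) (X : set 'rV[R]_S)
  (rho : R) (g : 'rV[R]_S -> R) : Prop :=
  convex_fun_on X (fun x => - g x + rho / 2 * sqnorm x).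

Definition C1_on (R : realType) (V W : normedModType R) (U : set V) (f : V -> W)
  : Prop :=
  (forall x, U x -> differentiable f x) /\
  (forall v x, U x -> {for x, continuous (fun y => 'D_v f y)}).

Definition C2_on (R : realType) (V W : normedModType R) (U : set V) (f : V -> W)
  : Prop :=
  C1_on U f /\ (forall v, C1_on U (fun x => 'D_v f x)).

(* value function  h |-> max_{W in Wset} F(W, h)  (written as a supremum,
   which is the maximum whenever the maximum exists) *)
Definition maxF (R : realType) (M : nat) (F : Cvec R M -> Cvec R M -> R)
  (Wset : set (Cvec R M)) (h : Cvec R M) : R :=
  sup [set F W h | W in Wset].

Definition Zmoment (R : realType) (dX : measure_display) (Xi : measurableType dX)
  (P : probability Xi R) (d : measure_display) (Omega : measurableType d)
  (omega : Xi -> Omega) (p : R) (f : Omega -> R) : Prop :=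
  measurable_fun setT f /\
  (\int[P]_xi ((`|f (omega xi)| `^ p)%:E) < +oo)%E.
Arguments Zmoment {R dX Xi} P {d Omega} omega p f.

From HB Require Import structures.
From mathcomp Require Import all_boot all_order all_algebra.
From mathcomp Require Import all_classical all_reals all_analysis.
Import Order.TTheory GRing.Theory Num.Theory.
Import numFieldNormedType.Exports.
Local Open Scope classical_set_scope.
Local Open Scope ring_scope.
From mathcomp Require Import lra ring.

(* For a fixed W, the map th |-> F(W, H(th, omega)) has, along every segment
   [y, x], a derivative whose decrease over [a, b] is at most
   (sup |D^2 F| sup |D H|^2 + sup |D F| Lip(D H)) |x - y|^2 (b - a), by the chain
   rule and the mean value theorem.  These suprema are finite and independent of W
   because F is C^2 on the compact set Wset * H(Theta, omega), so all these maps
   satisfy f(t x + (1 - t) y) <= t f(x) + (1 - t) f(y) + c |x - y|^2 t (1 - t) with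
   one constant c.  This inequality survives taking the supremum over W, and since
   |.| is dominated by the Euclidean norm it gives (2c + 1)-weak convexity.
   Only (A1)-(A3) are needed. *)

Section SegmentCalculus.
Context {R : realType} {V : normedModType R}.

Definition seg (x y : V) (r : R) : V := r *: x + (1 - r) *: y.

Lemma segE (x y : V) (r : R) : seg x y r = r *: (x - y) + y.
Proof. by rewrite /seg scalerBl scale1r scalerBr -addrA [- _ + y]addrC. Qed.

Lemma seg_shift (x y : V) (r s : R) : seg x y (s + r) = s *: (x - y) + seg x y r.
Proof. by rewrite !segE scalerDl addrA. Qed.

Lemma seg_sub (x y : V) (a b : R) : seg x y a - seg x y b = (a - b) *: (x - y).
Proof. by rewrite !segE opprD addrACA subrr addr0 scalerBl. Qed.

Lemma seg1 (x y : V) : seg x y 1 = x.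
Proof. by rewrite /seg scale1r subrr scale0r addr0. Qed.

Lemma seg0 (x y : V) : seg x y 0 = y.
Proof. by rewrite /seg scale0r add0r subr0 scale1r. Qed.

Lemma derive_seg (W : normedModType R) (g : V -> W) (x y : V) (s : R) :
  'D_1 (g \o seg x y) s = 'D_(x - y) g (seg x y s).
Proof.
rewrite /derive; congr lim; f_equal; apply/funext => h /=.
by rewrite [h *: 1]mulr1 seg_shift.
Qed.

Lemma differentiable_seg (x y : V) (r : R) : differentiable (seg x y) r.
Proof.
have -> : seg x y = (fun s => s *: (x - y)) + cst y by apply/funext => s; rewrite segE.
by apply: differentiableD => //; apply: (differentiableZl (k := id)).
Qed.

Lemma derive_comp_dir {W Z : normedModType R} (f : W -> Z) (h : V -> W) (x v : V) :
  differentiable h x -> differentiable f (h x) ->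
  'D_v (f \o h) x = 'D_('D_v h x) f (h x).
Proof.
move=> dh df; rewrite deriveE; last exact: differentiable_comp.
by rewrite diff_comp //= -!deriveE.
Qed.

Lemma derive_pair {W1 W2 : normedModType R} (f : V -> W1) (g : V -> W2) (x v : V) :
  differentiable f x -> differentiable g x ->
  'D_v (fun y => (f y, g y)) x = ('D_v f x, 'D_v g x).
Proof.
move=> df dg; rewrite deriveE; last exact: differentiable_pair.
by rewrite diff_pair // -!deriveE.
Qed.

Lemma derive_pair_cst {W1 W2 : normedModType R} (a : W1) (g : V -> W2) (x v : V) :
  differentiable g x -> 'D_v (fun y => (a, g y)) x = (0, 'D_v g x).
Proof. by move=> dg; rewrite derive_pair // derive_cst. Qed.

End SegmentCalculus.

Lemma normr_pair0 {R : realType} {W1 W2 : normedModType R} (z : W2) :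
  `|((0 : W1), z)| = `|z|.
Proof. by rewrite prod_normE /= normr0; apply: max_r. Qed.

Section Semiconvexity.
Context {R : realType}.

Lemma differentiable_MVT (G : R -> R) (a b : R) : a < b ->
  (forall r : R, a <= r <= b -> differentiable G r) ->
  exists2 c : R, a < c < b & G b - G a = 'D_1 G c * (b - a).
Proof.
move=> ab dG.
have der x : x \in `]a, b[%R -> is_derive x 1 G ('D_1 G x).
  rewrite in_itv /= => /andP[ax xb].
  by apply/derivableP/diff_derivable/dG; rewrite !ltW.
have cont : {within `[a, b], continuous G}.
  apply: continuous_in_subspaceT => x; rewrite inE /= in_itv /= => axb.
  exact/differentiable_continuous/dG.
have [c cab E] := MVT ab der cont.
by exists c => //; move: cab; rewrite in_itv.
Qed.

Lemma le_secant_of_derive_drop (psi : R -> R) (M : R) : 0 <= M ->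
  (forall s : R, 0 <= s <= 1 -> differentiable psi s) ->
  (forall a b : R, 0 < a -> a < b -> b < 1 -> 'D_1 psi a - 'D_1 psi b <= M * (b - a)) ->
  forall t : R, 0 <= t <= 1 -> psi t <= t * psi 1 + (1 - t) * psi 0 + M * (t * (1 - t)).
Proof.
move=> M0 dpsi drop t /andP[t0 t1].
have [->|tn0] := eqVneq t 0; first lra.
have [->|tn1] := eqVneq t 1; first lra.
have t0' : 0 < t by rewrite lt_neqAle eq_sym tn0.
have t1' : t < 1 by rewrite lt_neqAle tn1.
have [c1 /andP[c10 c1t] E1] : exists2 c, 0 < c < t & psi t - psi 0 = 'D_1 psi c * (t - 0).
  by apply: differentiable_MVT => // r /andP[r0 rt]; apply: dpsi; rewrite r0 (le_trans rt t1).
have [c2 /andP[tc2 c21] E2] : exists2 c, t < c < 1 & psi 1 - psi t = 'D_1 psi c * (1 - t).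
  by apply: differentiable_MVT => // r /andP[tr r1]; apply: dpsi; rewrite r1 (le_trans t0 tr).
have drop12 := drop c1 c2 c10 (lt_trans c1t tc2) c21.
set A := 'D_1 psi c2 in E2 drop12; set B := 'D_1 psi c1 in E1 drop12.
have BA : B - A <= M by apply: le_trans drop12 _; rewrite ler_piMr //; lra.
have : t * (1 - t) * (B - A) <= t * (1 - t) * M.
  by apply: ler_wpM2l => //; apply: mulr_ge0; lra.
have -> : psi 1 = psi t + A * (1 - t) by lra.
have -> : psi 0 = psi t - B * t by rewrite subr0 in E1; lra.
lra.
Qed.

Context {V : normedModType R}.

Lemma le_seg_of_derive_drop (g : V -> R) (x y : V) (M : R) : 0 <= M ->
  (forall r : R, 0 <= r <= 1 -> differentiable g (seg x y r)) ->
  (forall a b : R, 0 < a -> a < b -> b < 1 ->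
     'D_(x - y) g (seg x y a) - 'D_(x - y) g (seg x y b) <= M * (b - a)) ->
  forall t : R, 0 <= t <= 1 ->
    g (seg x y t) <= t * g x + (1 - t) * g y + M * (t * (1 - t)).
Proof.
move=> M0 dg drop.
have := le_secant_of_derive_drop (g \o seg x y) M M0.
rewrite /= seg1 seg0; apply.
- by move=> r r01; apply: differentiable_comp; [exact: differentiable_seg | exact: dg].
- by move=> a b a0 ab b1; rewrite !derive_seg; exact: drop.
Qed.

Lemma seg_dist_le (g : V -> R) (x y : V) (a b L : R) : a < b ->
  (forall r : R, a <= r <= b -> differentiable g (seg x y r)) ->
  (forall r : R, a <= r <= b -> `|'D_(x - y) g (seg x y r)| <= L) ->
  `|g (seg x y b) - g (seg x y a)| <= L * (b - a).
Proof.
move=> ab dg Dg.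
have [c /andP[ac cb] ->] := differentiable_MVT (g \o seg x y) a b ab
  (fun r hr => differentiable_comp (differentiable_seg x y r) (dg r hr)).
have ba0 : 0 <= b - a by rewrite subr_ge0 ltW.
rewrite derive_seg normrM [`|b - a|]ger0_norm //.
by apply: ler_wpM2r => //; apply: Dg; rewrite !ltW.
Qed.

Definition semiconvex_on (X : set V) (c : R) (g : V -> R) : Prop :=
  forall x y t, X x -> X y -> 0 <= t <= 1 ->
    g (seg x y t) <= t * g x + (1 - t) * g y + c * `|x - y| ^+ 2 * (t * (1 - t)).

Lemma semiconvex_on_sup {I : Type} (A : set I) (g : I -> V -> R) (X : set V) (c : R) :
  0 <= c -> (forall x, X x -> has_ubound [set g i x | i in A]) ->
  (forall i, A i -> semiconvex_on X c (g i)) ->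
  semiconvex_on X c (fun x => sup [set g i x | i in A]).
Proof.
move=> c0 ub gc x y t Xx Xy /[dup] t01 /andP[t0 t1].
have gap0 : 0 <= c * `|x - y| ^+ 2 * (t * (1 - t)).
  by rewrite !mulr_ge0 ?subr_ge0.
have [[i0 Ai0]|A0] := pselect (exists i, A i); last first.
  have E z : [set g i z | i in A] = set0.
    by apply/seteqP; split => // w [i Ai _]; apply: A0; exists i.
  by rewrite !E sup0 !mulr0 !add0r.
apply: ge_sup; first by exists (g i0 (seg x y t)), i0.
move=> _ [i Ai <-]; apply: le_trans (gc i Ai x y t Xx Xy t01) _.
rewrite lerD2r; apply: lerD; apply: ler_wpM2l; rewrite ?subr_ge0 //;
  by apply: ub_le_sup; [exact: ub | exists i].
Qed.

End Semiconvexity.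

Section WeakConvexity.
Context {R : realType} {S : nat}.

Lemma sqnorm_seg (x y : 'rV[R]_S) (t : R) :
  sqnorm (seg x y t) = t * sqnorm x + (1 - t) * sqnorm y - t * (1 - t) * sqnorm (x - y).
Proof.
rewrite /sqnorm !mulr_sumr -big_split -sumrB /=.
by apply: eq_bigr => i _; rewrite !mxE; ring.
Qed.

Lemma normr_sqr_le_sqnorm (z : 'rV[R]_S) : `|z| ^+ 2 <= sqnorm z.
Proof.
have [z0|zn0] := eqVneq `|z| 0.
  by rewrite z0 expr0n /=; apply: sumr_ge0 => i _; exact: sqr_ge0.
have -> : `|z| = mx_norm z by [].
have [[i j] ->] := mx_norm_neq0 zn0.
rewrite /sqnorm (bigD1 j) //= ord1 real_normK ?num_real //.
by rewrite lerDl; apply: sumr_ge0 => k _; exact: sqr_ge0.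
Qed.

Lemma weakly_convex_of_semiconvex (X : set 'rV[R]_S)
    (c rho : R) (g : 'rV[R]_S -> R) :
  0 <= c -> 2 * c <= rho -> semiconvex_on X c g -> weakly_convex_on X rho g.
Proof.
move=> c0 crho gc x y t Xx Xy /[dup] t01 /andP[t0 t1].
have := gc x y t Xx Xy t01; rewrite -/(seg x y t) sqnorm_seg.
have tt : 0 <= t * (1 - t) by rewrite mulr_ge0 ?subr_ge0.
have gap : c * `|x - y| ^+ 2 <= rho / 2 * sqnorm (x - y).
  apply: le_trans (ler_wpM2l c0 (normr_sqr_le_sqnorm (x - y))) _.
  apply: ler_wpM2r; first by apply: sumr_ge0 => i _; exact: sqr_ge0.
  lra.
have := ler_wpM2r tt gap.
lra.
Qed.

End WeakConvexity.

Section CompositeSemiconvexity.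
Context {R : realType} {V W : normedModType R}.
Variables (f : W -> R) (h : V -> W) (X : set V) (K : set W) (C1 C2 CH L : R).
Hypothesis f_diff : forall p, differentiable f p.
Hypothesis Df_diff : forall v p, differentiable ('D_v f) p.
Hypothesis h_diff : forall th, X th -> differentiable h th.
Hypothesis hXK : forall th, X th -> K (h th).
Hypotheses (C1_ge0 : 0 <= C1) (C2_ge0 : 0 <= C2) (L_ge0 : 0 <= L).
Hypothesis Df_bound : forall p w, K p -> `|'D_w f p| <= C1 * `|w|.
Hypothesis D2f_bound : forall p u w, K p -> `|'D_u ('D_w f) p| <= C2 * `|u| * `|w|.
Hypothesis Dh_bound : forall th v, X th -> `|'D_v h th| <= CH * `|v|.
Hypothesis Dh_lipschitz : forall th1 th2 v, X th1 -> X th2 ->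
  `|'D_v h th1 - 'D_v h th2| <= L * `|th1 - th2| * `|v|.

Let Lc := C2 * CH ^+ 2 + C1 * L.

Lemma comp_derive_drop (x y : V) :
  (forall r : R, 0 <= r <= 1 -> X (seg x y r)) ->
  forall a b : R, 0 < a -> a < b -> b < 1 ->
    'D_(x - y) (f \o h) (seg x y a) - 'D_(x - y) (f \o h) (seg x y b)
      <= Lc * `|x - y| ^+ 2 * (b - a).
Proof.
move=> Xseg a b a0 ab b1.
have Xab r : a <= r <= b -> X (seg x y r).
  by case/andP=> ar rb; apply: Xseg; rewrite (le_trans (ltW a0) ar) (le_trans rb (ltW b1)).
have [Xa Xb] : X (seg x y a) /\ X (seg x y b) by split; apply: Xab; rewrite lexx ltW.
have ba0 : 0 <= b - a by rewrite subr_ge0 ltW.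
pose k r := 'D_(x - y) h (seg x y r).
have k_bound r : a <= r <= b -> `|k r| <= CH * `|x - y|.
  by move=> hr; apply: Dh_bound; exact: Xab.
rewrite (derive_comp_dir f h _ _ (h_diff _ Xa)) // (derive_comp_dir f h _ _ (h_diff _ Xb)) //.
rewrite -/(k a) -/(k b).
have -> : 'D_(k a) f (h (seg x y a)) - 'D_(k b) f (h (seg x y b)) =
    'D_(k a - k b) f (h (seg x y a)) -
    ('D_(k b) f (h (seg x y b)) - 'D_(k b) f (h (seg x y a))).
  by rewrite [in RHS]deriveE // linearB /= -!deriveE // opprB addrA subrK.
have direction_change : `|'D_(k a - k b) f (h (seg x y a))| <=
    C1 * L * `|x - y| ^+ 2 * (b - a).
  have kab : `|k a - k b| <= L * ((b - a) * `|x - y|) * `|x - y|.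
    have := Dh_lipschitz _ _ (x - y) Xa Xb.
    by rewrite seg_sub normrZ [`|a - b|]distrC ger0_norm.
  apply: le_trans (Df_bound _ _ (hXK _ Xa)) _.
  have -> : C1 * L * `|x - y| ^+ 2 * (b - a) = C1 * (L * ((b - a) * `|x - y|) * `|x - y|).
    by ring.
  exact: ler_wpM2l.
have basepoint_change : `|'D_(k b) f (h (seg x y b)) - 'D_(k b) f (h (seg x y a))| <=
    C2 * CH ^+ 2 * `|x - y| ^+ 2 * (b - a).
  apply: (seg_dist_le ('D_(k b) f \o h)) => // r hr.
    exact: differentiable_comp (h_diff _ (Xab r hr)) (Df_diff _ _).
  rewrite (derive_comp_dir _ h _ _ (h_diff _ (Xab r hr))) //.
  apply: le_trans (D2f_bound _ _ _ (hXK _ (Xab r hr))) _.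
  have -> : C2 * CH ^+ 2 * `|x - y| ^+ 2 = C2 * (CH * `|x - y|) * (CH * `|x - y|) by ring.
  apply: ler_pM; rewrite ?mulr_ge0 ?normr_ge0 //; first by apply: ler_wpM2l => //; exact: k_bound.
  by apply: k_bound; rewrite lexx ltW.
have -> : Lc * `|x - y| ^+ 2 * (b - a) =
    C1 * L * `|x - y| ^+ 2 * (b - a) + C2 * CH ^+ 2 * `|x - y| ^+ 2 * (b - a).
  by rewrite /Lc; ring.
apply: lerD; first exact: le_trans (ler_norm _) direction_change.
by apply: le_trans (ler_norm _) _; rewrite normrN.
Qed.

Lemma semiconvex_on_comp :
  (forall x y t, X x -> X y -> 0 <= t <= 1 -> X (seg x y t)) ->
  semiconvex_on X Lc (f \o h).
Proof.
move=> Xconvex x y t Xx Xy t01.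
have Lc0 : 0 <= Lc * `|x - y| ^+ 2.
  apply: mulr_ge0; last exact: sqr_ge0.
  by apply: addr_ge0; apply: mulr_ge0; rewrite ?sqr_ge0.
apply: le_seg_of_derive_drop t01 => //.
- move=> r r01; have Xr := Xconvex x y r Xx Xy r01.
  exact: differentiable_comp (h_diff _ Xr) (f_diff _).
- by apply: comp_derive_drop => r; exact: Xconvex.
Qed.

End CompositeSemiconvexity.

Section DerivativeBounds.
Context {R : realType}.

(* Coordinates dominated by the norm: bounds on the finitely many [D_(e i) f]
   then control every directional derivative [D_w f]. *)
Definition frame {V : normedModType R} {I : finType} (e : I -> V) (c : I -> V -> R) :=
  (forall w, w = \sum_i c i w *: e i) /\ (forall i w, `|c i w| <= `|w|).

Definition has_frame (V : normedModType R) :=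
  exists (I : finType) (e : I -> V) (c : I -> V -> R), frame e c.

Lemma has_frame_rV n : has_frame 'rV[R]_n.
Proof.
exists 'I_n, (fun j => delta_mx 0 j), (fun j (w : 'rV[R]_n) => w 0 j); split.
- move=> w; apply/rowP => j; rewrite summxE (bigD1 j) //= big1 ?addr0.
    by rewrite !mxE !eqxx mulr1.
  by move=> k kj; rewrite !mxE eqxx eq_sym (negbTE kj) mulr0.
- move=> j w; rewrite [`|w|]mx_normrE; exact: (le_bigmax _ _ (0, j)).
Qed.

Lemma has_frame_prod (V1 V2 : normedModType R) :
  has_frame V1 -> has_frame V2 -> has_frame (V1 * V2)%type.
Proof.
move=> [I1 [e1 [c1 [d1 b1]]]] [I2 [e2 [c2 [d2 b2]]]].
exists (I1 + I2)%type.
exists (fun i => match i with inl i => (e1 i, 0) | inr j => (0, e2 j) end).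
exists (fun i w => match i with inl i => c1 i w.1 | inr j => c2 j w.2 end).
split.
- case=> w1 w2; rewrite big_sumType /=.
  have -> : \sum_i c1 i w1 *: ((e1 i, 0) : (V1 * V2)%type) = (\sum_i c1 i w1 *: e1 i, 0).
    by elim/big_rec2: _ => // i a b _ ->; congr (_, _); rewrite /= ?scaler0 ?addr0.
  have -> : \sum_i c2 i w2 *: ((0, e2 i) : (V1 * V2)%type) = (0, \sum_i c2 i w2 *: e2 i).
    by elim/big_rec2: _ => // i a b _ ->; congr (_, _); rewrite /= ?scaler0 ?addr0.
  by rewrite -d1 -d2; congr (_, _); rewrite /= ?addr0 ?add0r.
- by move=> [i|j] [w1 w2]; rewrite prod_normE le_max /= ?b1 ?b2 ?orbT.
Qed.

Lemma derive_frame {V W : normedModType R} {I : finType} {e : I -> V} {c}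
    {f : V -> W} {q : V} (w : V) :
  frame e c -> differentiable f q -> 'D_w f q = \sum_i c i w *: 'D_(e i) f q.
Proof.
move=> [d _] df; rewrite deriveE // {1}(d w) linear_sum.
by apply: eq_bigr => i _; rewrite linearZ deriveE.
Qed.

Lemma derive_lincomb {V W : normedModType R} {I : finType} (a : I -> R)
    (g : I -> V -> W) x v :
  (forall i, derivable (g i) x v) ->
  'D_v (fun q => \sum_i a i *: g i q) x = \sum_i a i *: 'D_v (g i) x.
Proof.
move=> dg.
suff /(_ (index_enum I))[] : forall r, derivable (fun q => \sum_(i <- r) a i *: g i q) x v /\
  'D_v (fun q => \sum_(i <- r) a i *: g i q) x = \sum_(i <- r) a i *: 'D_v (g i) x by [].
elim=> [|i r [IH1 IH2]].
  under eq_fun do rewrite big_nil.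
  by rewrite big_nil derive_cst; split => //; exact: derivable_cst.
have -> : (fun q => \sum_(j <- i :: r) a j *: g j q) =
    (a i \*: g i) + (fun q => \sum_(j <- r) a j *: g j q).
  by apply/funext => q; rewrite big_cons.
split; first by apply: derivableD => //; exact: derivableZ.
by rewrite deriveD ?deriveZ ?IH2 ?big_cons //; exact: derivableZ.
Qed.

Lemma compact_continuous_ub {T : topologicalType} (K : set T) (g : T -> R) :
  compact K -> (forall q, K q -> {for q, continuous g}) ->
  exists M, 0 <= M /\ forall q, K q -> g q <= M.
Proof.
move=> cK cg.
have [[q0 Kq0]|K0] := pselect (exists q, K q); last first.
  by exists 0; split=> // q Kq; exfalso; apply: K0; exists q.
have [c _ gc] : exists2 c, c \in K & forall t, t \in K -> g t <= g c.
  apply: compact_EVT_max => //; first by exists q0.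
  by apply: continuous_in_subspaceT => q; rewrite inE; exact: cg.
exists (Num.max (g c) 0); split=> [|q Kq]; first by rewrite le_max lexx orbT.
by rewrite le_max gc ?inE.
Qed.

Lemma derive_bounded_on_compact {V W : normedModType R} (K : set V) (f : V -> W) :
  has_frame V -> compact K -> (forall q, K q -> differentiable f q) ->
  (forall v q, K q -> {for q, continuous ('D_v f)}) ->
  exists C, 0 <= C /\ forall q w, K q -> `|'D_w f q| <= C * `|w|.
Proof.
move=> [I [e [c fr]]] cK df cDf.
have [M [M0 HM]] : exists M, 0 <= M /\ forall q, K q -> \sum_i `|'D_(e i) f q| <= M.
  apply: compact_continuous_ub cK _ => q Kq.
  apply: cvg_big => //; first exact: add_continuous.
  move=> i _; exact: continuous_comp (cDf (e i) q Kq) (@norm_continuous _ _ _).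
exists M; split => // q w Kq.
rewrite (derive_frame w fr (df q Kq)).
apply: le_trans (ler_norm_sum _ _ _) _.
apply: (@le_trans _ _ (\sum_i `|w| * `|'D_(e i) f q|)).
  by apply: ler_sum => i _; rewrite normrZ ler_wpM2r //; exact: fr.2.
by rewrite -mulr_sumr mulrC ler_wpM2r // HM.
Qed.

Lemma derive2_bounded_on_compact {V W : normedModType R} (K : set V) (f : V -> W) :
  has_frame V -> compact K -> (forall q, differentiable f q) ->
  (forall v q, differentiable ('D_v f) q) ->
  (forall u v q, K q -> {for q, continuous ('D_u ('D_v f))}) ->
  exists C, 0 <= C /\ forall q u w, K q -> `|'D_u ('D_w f) q| <= C * `|u| * `|w|.
Proof.
move=> hV cK df ddf cdd; have [I [e [c fr]]] := hV.
have [C HC] := choice (fun i => derive_bounded_on_compact K ('D_(e i) f) hV cK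
  (fun q _ => ddf _ q) (fun u q Kq => cdd u (e i) q Kq)).
exists (\sum_i C i); split; first by apply: sumr_ge0 => i _; exact: (HC i).1.
move=> q u w Kq.
have -> : 'D_w f = (fun p => \sum_i c i w *: 'D_(e i) f p).
  by apply/funext => p; exact: derive_frame w fr (df p).
rewrite derive_lincomb; last by move=> i; exact/diff_derivable/ddf.
apply: le_trans (ler_norm_sum _ _ _) _.
rewrite !mulr_suml; apply: ler_sum => i _.
rewrite normrZ mulrC; apply: ler_pM => //; [exact: (HC i).2 | exact: fr.2].
Qed.

End DerivativeBounds.

Lemma semiconvex_on_maxF {R : realType} {S MU : nat} {Theta U : set 'rV[R]_S}
    {Wset : set (Cvec R MU)} {F : Cvec R MU -> Cvec R MU -> R}
    {h : 'rV[R]_S -> Cvec R MU} {L : R} :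
  Theta `<=` U -> C2_on setT (fun p : Cvec R MU * Cvec R MU => F p.1 p.2) ->
  compact Theta -> compact Wset -> convex_set_on Theta -> C2_on U h ->
  (forall th1 th2 v, Theta th1 -> Theta th2 ->
     `|'D_v h th1 - 'D_v h th2| <= L * `|th1 - th2| * `|v|) ->
  exists c, 0 <= c /\ semiconvex_on Theta c (fun th => maxF F Wset (h th)).
Proof.
move=> ThU [[dF cDF] D2F] cTh cW cvx [[dh cDh] _] hL.
pose Fp := fun p : Cvec R MU * Cvec R MU => F p.1 p.2.
have frameV : has_frame (Cvec R MU * Cvec R MU)%type.
  by apply: has_frame_prod; apply: has_frame_prod; exact: has_frame_rV.
pose K := Wset `*` (h @` Theta).
have cK : compact K.
  apply: compact_setX => //; apply: continuous_compact => //.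
  apply: continuous_in_subspaceT => q; rewrite inE => Tq.
  exact/differentiable_continuous/dh/ThU.
have [C0 [_ Fp_ub]] := compact_continuous_ub K (fun p => `|Fp p|) cK
  (fun p _ => continuous_comp (differentiable_continuous (dF p I)) (@norm_continuous _ _ _)).
have [C1 [C1_ge0 DFp_bound]] := derive_bounded_on_compact K Fp frameV cK
  (fun p _ => dF p I) (fun v p _ => cDF v p I).
have [C2 [C2_ge0 D2Fp_bound]] := derive2_bounded_on_compact K Fp frameV cK
  (fun p => dF p I) (fun v p => (D2F v).1 p I) (fun u v p _ => (D2F v).2 u p I).
have [CH [_ Dh_bound]] := derive_bounded_on_compact Theta h (has_frame_rV S) cTh
  (fun q Tq => dh q (ThU q Tq)) (fun v q Tq => cDh v q (ThU q Tq)).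
have c_ge0 : 0 <= C2 * CH ^+ 2 + C1 * `|L|.
  by apply: addr_ge0; apply: mulr_ge0; rewrite ?sqr_ge0.
exists (C2 * CH ^+ 2 + C1 * `|L|); split => //.
rewrite /maxF; apply: (semiconvex_on_sup Wset (fun W th => F W (h th))) => // [th Tth|W WW].
  exists C0 => _ [W WW <-]; apply: le_trans (ler_norm _) (Fp_ub (W, h th) _).
  by split => //; exists th.
have dhW th : Theta th -> differentiable (fun th => (W, h th)) th.
  by move=> Tth; apply: differentiable_pair => //; exact/dh/ThU.
apply: (semiconvex_on_comp Fp (fun th => (W, h th)) Theta K C1 C2 CH `|L|) => //.
- by move=> p; exact: dF p I.
- by move=> v p; exact: (D2F v).1 p I.
- by move=> th Tth; split => //; exists th.
- by move=> th v Tth; rewrite derive_pair_cst ?normr_pair0 ?Dh_bound //; exact/dh/ThU.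
- move=> th1 th2 v T1 T2; rewrite !derive_pair_cst; try exact/dh/ThU.
  have -> : ((0, 'D_v h th1) - (0, 'D_v h th2) : Cvec R MU * Cvec R MU) =
    (0, 'D_v h th1 - 'D_v h th2) by congr pair; rewrite /= subrr.
  rewrite normr_pair0; apply: le_trans (hL _ _ _ T1 T2) _.
  by rewrite -!mulrA ler_wpM2r ?mulr_ge0 // ler_norm.
Qed.

Theorem lemma3
  (R : realType)
  (dX : measure_display) (Xi : measurableType dX) (P : probability Xi R)
  (d : measure_display) (Omega : measurableType d)
  (omega : Xi -> Omega)
  (S MU : nat)
  (Theta : set 'rV[R]_S) (Wset : set (Cvec R MU))
  (F : Cvec R MU -> Cvec R MU -> R)
  (U : set 'rV[R]_S)
  (H : 'rV[R]_S -> Omega -> Cvec R MU)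
  (* standing setting *)
  (HPcomplete : measure_is_complete P)
  (Homega : measurable_fun setT omega)
  (HS : (0 < S)%N) (HMU : (0 < MU)%N)
  (HUopen : open U) (HThetaU : Theta `<=` U)
  (* (A1) *)
  (A1 : C2_on setT (fun p : Cvec R MU * Cvec R MU => F p.1 p.2))
  (* (A2) *)
  (A2a : compact Theta) (A2b : compact Wset) (A2c : convex_set_on Theta)
  (* (A3) *)
  (A3 : exists B_H L_H0 L_H1 : R,
      {ae P, forall xi : Xi,
        (forall th, Theta th -> `|H th (omega xi)| <= B_H) /\
        C2_on U (fun th => H th (omega xi)) /\
        (forall th1 th2, Theta th1 -> Theta th2 ->
           `|H th1 (omega xi) - H th2 (omega xi)| <= L_H0 * `|th1 - th2|) /\
        (forall th1 th2 v, Theta th1 -> Theta th2 ->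
           `|'D_v (fun th => H th (omega xi)) th1
             - 'D_v (fun th => H th (omega xi)) th2|
             <= L_H1 * `|th1 - th2| * `|v|)})
  (* (A4) *)
  (A4 : exists rho_t : Omega -> R,
      (forall o, 0 < rho_t o) /\ Zmoment P omega 1 rho_t /\
      {ae P, forall xi : Xi,
        weakly_concave_on Theta (rho_t (omega xi))
          (fun th => maxF F Wset (H th (omega xi)))})
  (* (A5) *)
  (A5 : forall th, Theta th ->
      forall Wstar : Omega -> Cvec R MU,
        (forall o, Wset (Wstar o) /\
           (forall W, Wset W -> F W (H th o) <= F (Wstar o) (H th o))) ->
        Zmoment P omega 2 (fun o => F (Wstar o) (H th o)) /\
        (exists lb : R, forall o, lb <= F (Wstar o) (H th o))) :
  {ae P, forall xi : Xi, exists rho_h : R, 0 < rho_h /\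
      weakly_convex_on Theta rho_h (fun th => maxF F Wset (H th (omega xi)))}.
Proof.
case: A3 => B_H [L_H0 [L HA3]].
apply: filterS HA3 => xi [_ [H_C2 [_ DH_lipschitz]]].
have [c [c_ge0 semiconvex]] :=
  semiconvex_on_maxF HThetaU A1 A2a A2b A2c H_C2 DH_lipschitz.
exists (2 * c + 1); split; first by rewrite ltr_pwDr // mulr_ge0.
by apply: weakly_convex_of_semiconvex semiconvex; rewrite // lerDl.
Qed.
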